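(* Let $I$ be a finite tree and let $\Sigma$ be a morphism of $R_0(I)$ from an orientation $\Gamma$ to itself which is not the identity. Then every reduced expression for $\Sigma$ contains $\Sigma_i$ for every vertex $i\in I$.
   Context: Let $I$ be a finite tree. $\mathrm{Quiv}(I)$ is the set of orientations of $I$. For $\Gamma\in\mathrm{Quiv}(I)$ and a source or sink $i$ of $\Gamma$, $s_i\Gamma$ is the orientation obtained by reversing all arrows at $i$. The groupoid $R_0(I)$ has object set $\mathrm{Quiv}(I)$ and is generated by elementary isomorphisms $\Sigma_i:\Gamma\to s_i\Gamma$ (for each $\Gamma$ and each source or sink $i$ of $\Gamma$) subject to the relations, whenever both sides are defined: (R1) $\Sigma_i^2=1$; (R2) $\Sigma_i\Sigma_j=\Sigma_j\Sigma_i$ when $i,j$ are not adjacent. An expression for a morphism $\Sigma$ is a composable word $\Sigma_{i_1}\cdots\Sigma_{i_r}$ equal to $\Sigma$; $\ell(\Sigma)$ is the minimal length of an expression, and an expression of length $\ell(\Sigma)$ is called reduced. *)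

From mathcomp Require Import all_boot.
From Stdlib Require Import Relations.Relation_Operators.
Set Implicit Arguments. Unset Strict Implicit. Unset Printing Implicit Defensive.

Section Defs.
Variable T : finType.

Definition is_tree (adj : rel T) : Prop :=
  [/\ 0 < #|T|,
      symmetric adj,
      irreflexive adj,
      (forall i j : T, connect adj i j) &
      (forall (x : T) (p : seq T), uniq (x :: p) -> 2 <= size p ->
          path adj x p -> ~~ adj (last x p) x)].

(* An orientation is the set of its arrows (i,j) meaning i -> j;
   each edge gets exactly one direction. *)
Definition is_orientation (adj : rel T) (G : {set T * T}) : Prop :=
  (forall i j, (i, j) \in G -> adj i j) /\
  (forall i j, adj i j -> ((i, j) \in G) (+) ((j, i) \in G)).

Definition is_source (G : {set T * T}) (i : T) : bool := [forall j, (j, i) \notin G].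
Definition is_sink (G : {set T * T}) (i : T) : bool := [forall j, (i, j) \notin G].
Definition source_or_sink (G : {set T * T}) (i : T) : bool := is_source G i || is_sink G i.

Definition reflect_at (G : {set T * T}) (i : T) : {set T * T} :=
  [set e : T * T | if (e.1 == i) || (e.2 == i) then (e.2, e.1) \in G else e \in G].

(* A word w = [:: i1; ...; ir], applied from the left: first Sigma_{i1} at G,
   then Sigma_{i2} at s_{i1} G, etc.  valid = composable. *)
Fixpoint valid (G : {set T * T}) (w : seq T) : bool :=
  if w is i :: w' then source_or_sink G i && valid (reflect_at G i) w' else true.

Definition endpt (G : {set T * T}) (w : seq T) : {set T * T} := foldl reflect_at G w.

Inductive rstep (adj : rel T) (G : {set T * T}) : seq T -> seq T -> Prop :=
| rstep_R1 (p q : seq T) (i : T) :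
    valid G (p ++ i :: i :: q) -> rstep adj G (p ++ i :: i :: q) (p ++ q)
| rstep_R2 (p q : seq T) (i j : T) :
    ~~ adj i j -> valid G (p ++ i :: j :: q) -> valid G (p ++ j :: i :: q) ->
    rstep adj G (p ++ i :: j :: q) (p ++ j :: i :: q).

(* Two composable words from G define the same morphism of R_0(I). *)
Definition req (adj : rel T) (G : {set T * T}) : seq T -> seq T -> Prop :=
  clos_refl_sym_trans (seq T) (rstep adj G).

End Defs.

From mathcomp Require Import all_boot all_algebra zify.
From Stdlib Require Import Relations.Relation_Operators.
Set Implicit Arguments. Unset Strict Implicit. Unset Printing Implicit Defensive.
Import GRing.Theory.

(** Follow a composable word with a height function [c : T -> int]: each
    reflection at a sink raises the height of that vertex by one, each one at a
    source lowers it by one. Across an edge [a -- b], [c a - c b] moves only with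
    the orientation of that edge, so along a word from [G] back to [G] the
    heights are constant on the connected tree; if the word misses a vertex they
    all vanish. A nonempty word with vanishing heights has a peak: a letter
    increasing [sum |c|] immediately followed by one decreasing it. The two
    letters of a peak cannot be adjacent vertices, so they are either equal
    (cancel them by R1) or commute (swap them by R2); both moves lower the area,
    the sum of [sum |c|] over all prefixes, and induction on the area reduces the
    word to the empty one. *)

Section Heights.
Variable T : finType.
Local Open Scope ring_scope.
Implicit Types (H : {set T * T}) (c : {ffun T -> int}) (w p q u v : seq T) (a b x : T).

Definition sgn H a : int := if is_sink H a then 1 else -1.

Definition bump c a (s : int) : {ffun T -> int} :=
  [ffun x => if x == a then c x + s else c x].

Fixpoint heights H c w : {ffun T -> int} :=
  if w is a :: w' then heights (reflect_at H a) (bump c a (sgn H a)) w' else c.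

Definition height_norm c : nat := \sum_x absz (c x).

Fixpoint area H c w : nat :=
  if w is a :: w' then
    let c' := bump c a (sgn H a) in (height_norm c' + area (reflect_at H a) c' w')%N
  else 0.

Definition climbs H c a : bool := 0 <= sgn H a * c a.

Lemma sgnP H a : sgn H a = 1 \/ sgn H a = -1.
Proof. by rewrite /sgn; case: ifP; [left | right]. Qed.

Lemma height_norm_bump c a s :
  (height_norm (bump c a s) + absz (c a) = height_norm c + absz (c a + s)%R)%N.
Proof.
rewrite /height_norm (bigD1 a) //= [in RHS](bigD1 a) //= ffunE eqxx.
rewrite (eq_bigr (fun x => absz (c x))) => [|x /negbTE]; last by rewrite ffunE => ->.
lia.
Qed.

Lemma height_norm_climb H c a :
  climbs H c a -> height_norm (bump c a (sgn H a)) = (height_norm c).+1.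
Proof.
by rewrite /climbs; have := height_norm_bump c a (sgn H a); case: (sgnP H a) => ->; lia.
Qed.

Lemma height_norm_descend H c a :
  ~~ climbs H c a -> (height_norm (bump c a (sgn H a))).+1 = height_norm c.
Proof.
by rewrite /climbs; have := height_norm_bump c a (sgn H a); case: (sgnP H a) => ->; lia.
Qed.

Lemma reflect_atK H a : reflect_at (reflect_at H a) a = H.
Proof. by apply/setP => -[u v]; rewrite !inE /=; case: (u == a); case: (v == a). Qed.

Lemma reflect_atC H a b : reflect_at (reflect_at H a) b = reflect_at (reflect_at H b) a.
Proof.
apply/setP => -[u v]; rewrite !inE /=.
by case: (u == a); case: (v == a); case: (u == b); case: (v == b).
Qed.

Lemma endpt_cat H p q : endpt H (p ++ q) = endpt (endpt H p) q.
Proof. exact: foldl_cat. Qed.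

Lemma valid_cat H p q : valid H (p ++ q) = valid H p && valid (endpt H p) q.
Proof. by elim: p H => [|a p IH] H //=; rewrite IH andbA. Qed.

Lemma heights_cat H c p q : heights H c (p ++ q) = heights (endpt H p) (heights H c p) q.
Proof. by elim: p H c => [|a p IH] H c //=. Qed.

Lemma area_cat H c p q :
  area H c (p ++ q) = (area H c p + area (endpt H p) (heights H c p) q)%N.
Proof. by elim: p H c => [|a p IH] H c //=; rewrite IH addnA. Qed.

Lemma heights_notin H c w a : a \notin w -> heights H c w a = c a.
Proof.
elim: w H c => [|x w IH] H c //=; rewrite in_cons negb_or => /andP[ax aw].
by rewrite IH // ffunE (negbTE ax).
Qed.

Lemma exists_peak H c x w :
  climbs H c x -> (height_norm (heights H c (x :: w)) <= height_norm c)%N ->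
  exists p a b q, [/\ x :: w = p ++ [:: a, b & q],
    climbs (endpt H p) (heights H c p) a &
    ~~ climbs (reflect_at (endpt H p) a) (bump (heights H c p) a (sgn (endpt H p) a)) b].
Proof.
elim: w H c x => [|y w IH] H c x up_x /=; first by rewrite (height_norm_climb up_x) ltnn.
set H1 := reflect_at H x; set c1 := bump c x (sgn H x) => norm_le.
have [up_y|down_y] := boolP (climbs H1 c1 y); last by exists [::], x, y, w.
have [|p [a [b [q [-> up_a down_b]]]]] := IH H1 c1 y up_y.
  by rewrite (height_norm_climb up_x) ltnW.
by exists (x :: p), a, b, q.
Qed.

Definition shortcut H c u v : Prop :=
  [/\ valid H v, heights H c v = heights H c u & (area H c v < area H c u)%N].

Lemma shortcut_cat H c p u v :
  valid H p -> shortcut (endpt H p) (heights H c p) u v -> shortcut H c (p ++ u) (p ++ v).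
Proof.
move=> vp [vv hv lt_area].
by split; rewrite ?valid_cat ?vp ?heights_cat ?hv // !area_cat ltn_add2l.
Qed.

Lemma cancel_peak H c a q :
  valid H [:: a, a & q] -> climbs H c a ->
  ~~ climbs (reflect_at H a) (bump c a (sgn H a)) a -> shortcut H c [:: a, a & q] q.
Proof.
rewrite /= reflect_atK => /and3P[_ _ vq] up_a down_a.
have back : bump (bump c a (sgn H a)) a (sgn (reflect_at H a) a) = c.
  apply/ffunP => x; rewrite !ffunE; case: eqVneq => [->|//].
  move: up_a down_a; rewrite /climbs !ffunE eqxx.
  by case: (sgnP H a) (sgnP (reflect_at H a) a) => -> [] ->; lia.
by split=> //=; rewrite back reflect_atK // (height_norm_climb up_a); lia.
Qed.

Section Orientations.
Variable adj : rel T.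
Hypothesis adj_sym : symmetric adj.

Lemma is_orientation_reflect H a :
  is_orientation adj H -> is_orientation adj (reflect_at H a).
Proof.
case=> in_adj xor_dir; split.
- move=> i j; rewrite inE /=; case: ifP => _ /in_adj //; by rewrite adj_sym.
- move=> i j /xor_dir; rewrite !inE /= [(j == a) || _]orbC.
  by case: ifP => _ //; rewrite addbC.
Qed.

Lemma is_orientation_endpt H w :
  is_orientation adj H -> is_orientation adj (endpt H w).
Proof. by elim: w H => [|a w IH] H //= /(is_orientation_reflect a); apply: IH. Qed.

Definition arrow H a b : int := if (a, b) \in H then 1 else 0.

Lemma arrow_rev H a b :
  is_orientation adj H -> adj a b -> arrow H a b = 1 - arrow H b a.
Proof. by case=> _ /(_ a b) xor_dir /xor_dir; rewrite /arrow; do 2!case: (_ \in H). Qed.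

Lemma arrow_reflect_other H x a b :
  x != a -> x != b -> arrow (reflect_at H x) a b = arrow H a b.
Proof. by move=> xa xb; rewrite /arrow inE /= !(eq_sym _ x) (negbTE xa) (negbTE xb). Qed.

Lemma arrow_reflect_at H x y : arrow (reflect_at H x) x y = arrow H y x.
Proof. by rewrite /arrow inE eqxx. Qed.

Lemma arrow_reflect_at_r H x y : arrow (reflect_at H x) y x = arrow H x y.
Proof. by rewrite /arrow inE eqxx orbT. Qed.

Lemma sgn_arrow H x y :
  is_orientation adj H -> source_or_sink H x -> adj x y -> sgn H x = 2 * arrow H y x - 1.
Proof.
move=> oH sx xy; have := arrow_rev oH xy; rewrite /sgn /arrow.
case sk: (is_sink H x); first by rewrite (negbTE (forallP sk y)); case: ifP.
move: sx; rewrite /source_or_sink sk orbF => /forallP/(_ y)/negbTE ->.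
by case: ifP.
Qed.

Lemma heights_edge_step H c x a b :
  is_orientation adj H -> source_or_sink H x -> adj a b -> a != b ->
  bump c x (sgn H x) a - bump c x (sgn H x) b =
    c a - c b + arrow H b a - arrow (reflect_at H x) b a.
Proof.
move=> oH + ab nab; rewrite !ffunE.
have ba : adj b a by rewrite adj_sym.
case: (eqVneq a x) => [<-|ax] sx.
  rewrite eq_sym (negbTE nab) (sgn_arrow oH sx ab) arrow_reflect_at_r.
  by rewrite (arrow_rev oH ab); lia.
case: (eqVneq b x) => [<-|bx] in sx *.
  by rewrite (sgn_arrow oH sx ba) arrow_reflect_at (arrow_rev oH ab); lia.
by rewrite arrow_reflect_other 1?eq_sym //; lia.
Qed.

Lemma heights_edge H c w a b :
  is_orientation adj H -> valid H w -> adj a b -> a != b ->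
  heights H c w a - heights H c w b =
    c a - c b + arrow H b a - arrow (endpt H w) b a.
Proof.
move=> + + ab nab; elim: w H c => [|x w IH] H c oH /=; first by lia.
case/andP=> sx vw; rewrite IH //; last exact: is_orientation_reflect.
by rewrite heights_edge_step //; lia.
Qed.

Lemma heights_loop_edge H w a b :
  is_orientation adj H -> valid H w -> endpt H w = H -> adj a b ->
  heights H 0 w a = heights H 0 w b.
Proof.
move=> oH vw loop ab; have [-> //|nab] := eqVneq a b.
by apply/eqP; rewrite -subr_eq0 heights_edge // loop addrK !ffunE subrr.
Qed.

Lemma heights_edge_close H w a b :
  is_orientation adj H -> valid H w -> adj a b -> a != b ->
  `|heights H 0 w a - heights H 0 w b| <= 1.
Proof.
move=> oH vw ab nab; rewrite heights_edge // !ffunE /arrow.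
by do 2!case: (_ \in _).
Qed.

Lemma sgn_reflect_adj H a b :
  is_orientation adj H -> adj a b -> source_or_sink H a ->
  source_or_sink (reflect_at H a) b -> sgn (reflect_at H a) b = sgn H a.
Proof.
move=> oH ab sa sb; have ba : adj b a by rewrite adj_sym.
rewrite (sgn_arrow (is_orientation_reflect a oH) sb ba) arrow_reflect_at.
by rewrite (sgn_arrow oH sa ab).
Qed.

(* Reflecting at [a] turns the edge [a -- b] so that [b] must move the way [a]
   just moved; at a peak this puts [a] and [b] at least two apart, whereas
   heights across an edge stay within one. *)
Lemma peak_not_adjacent H c a b :
  is_orientation adj H -> source_or_sink H a -> source_or_sink (reflect_at H a) b ->
  climbs H c a -> ~~ climbs (reflect_at H a) (bump c a (sgn H a)) b ->
  `|bump c a (sgn H a) a - bump c a (sgn H a) b| <= 1 -> ~~ adj a b.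
Proof.
move=> oH sa sb up_a + close; apply: contraNN => ab.
move: up_a close; rewrite /climbs (sgn_reflect_adj oH ab sa sb) !ffunE eqxx.
by case: (b == a); case: (sgnP H a) => ->; lia.
Qed.

Lemma reflect_at_nonadj H a x j :
  is_orientation adj H -> ~~ adj x a -> x != a ->
  ((x, j) \in reflect_at H a) = ((x, j) \in H) /\
  ((j, x) \in reflect_at H a) = ((j, x) \in H).
Proof.
move=> [in_adj _] nxa xa.
have [xa_out ax_out] : (x, a) \notin H /\ (a, x) \notin H.
  by split; apply: contraNN nxa => /in_adj //; rewrite adj_sym.
rewrite !inE /= (negbTE xa).
by case: (eqVneq j a) => [->|]; rewrite ?(negbTE xa_out) ?(negbTE ax_out).
Qed.

Lemma sgn_reflect_nonadj H a x :
  is_orientation adj H -> ~~ adj x a -> x != a ->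
  sgn (reflect_at H a) x = sgn H x /\
  source_or_sink (reflect_at H a) x = source_or_sink H x.
Proof.
move=> oH nxa xa.
have sink_x : is_sink (reflect_at H a) x = is_sink H x.
  by apply: eq_forallb => j; case: (reflect_at_nonadj j oH nxa xa) => ->.
have source_x : is_source (reflect_at H a) x = is_source H x.
  by apply: eq_forallb => j; case: (reflect_at_nonadj j oH nxa xa) => _ ->.
by rewrite /sgn /source_or_sink sink_x source_x.
Qed.

Lemma commute_peak H c a b q :
  is_orientation adj H -> valid H [:: a, b & q] -> a != b -> ~~ adj a b ->
  climbs H c a -> ~~ climbs (reflect_at H a) (bump c a (sgn H a)) b ->
  shortcut H c [:: a, b & q] [:: b, a & q].
Proof.
move=> oH /= /and3P[sa sb vq] nab nadj up_a down_b.
have nba : b != a by rewrite eq_sym.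
have nadj' : ~~ adj b a by rewrite adj_sym.
have [sgn_b ss_b] := sgn_reflect_nonadj oH nadj' nba.
have [sgn_a ss_a] := sgn_reflect_nonadj oH nadj nab.
have swap : bump (bump c b (sgn H b)) a (sgn H a) = bump (bump c a (sgn H a)) b (sgn H b).
  apply/ffunP => x; rewrite !ffunE.
  by case: (eqVneq x a) => [->|]; rewrite ?(negbTE nab) //; case: eqVneq.
have down_b' : ~~ climbs H c b.
  by move: down_b; rewrite /climbs sgn_b ffunE (negbTE nba).
split=> /=; first by rewrite -ss_b sb ss_a sa (reflect_atC H b a).
  by rewrite sgn_a sgn_b (reflect_atC H b a) swap.
rewrite sgn_a sgn_b (reflect_atC H b a) swap !addnA ltn_add2r.
by rewrite (height_norm_climb up_a) -(height_norm_descend down_b') ltnS leqnSn.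
Qed.

Definition balanced H w : Prop := heights H 0 w = 0.

Lemma balanced_shortcut G w :
  is_orientation adj G -> valid G w -> balanced G w -> w != [::] ->
  exists2 w', rstep adj G w w' & shortcut G 0 w w'.
Proof.
case: w => [//|x w] oG vw bw _.
have up_x : climbs G 0 x by rewrite /climbs ffunE mulr0.
have [|p [a [b [q [Ew up_a down_b]]]]] := exists_peak (w := w) up_x.
  by rewrite [heights G 0 _]bw.
rewrite {}Ew in vw *; move: (vw); rewrite valid_cat => /andP[vp vabq].
have oH := is_orientation_endpt p oG.
have [eab|nab] := eqVneq a b.
  subst b; exists (p ++ q); first exact: rstep_R1 vw.
  by apply: shortcut_cat => //; apply: cancel_peak.
move: (vabq) => /= /and3P[sa sb _].
have nadj : ~~ adj a b.
  apply/negP => ab; have vpa : valid G (p ++ [:: a]) by rewrite valid_cat vp /= sa.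
  have := heights_edge_close oG vpa ab nab; rewrite heights_cat /= => close.
  by move: ab; apply/negP; apply: (peak_not_adjacent oH sa sb up_a down_b).
have [vw' hw' lt_area] := shortcut_cat vp (commute_peak oH vabq nab nadj up_a down_b).
by exists (p ++ [:: b, a & q]); first exact: rstep_R2.
Qed.

Lemma balanced_req_nil G w :
  is_orientation adj G -> valid G w -> balanced G w -> req adj G w [::].
Proof.
move=> oG; have [n] := ubnP (area G 0 w); elim: n w => // n IHn w lt_area vw bw.
have [->|nw] := eqVneq w [::]; first exact: rst_refl.
have [w' st [vw' hw' lt_area']] := balanced_shortcut oG vw bw nw.
apply: (rst_trans _ _ _ w'); first exact: rst_step.
apply: IHn => //; last by rewrite /balanced hw'.
exact: leq_trans lt_area' _.
Qed.

End Orientations.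
End Heights.

Theorem mainTheorem18 (T : finType) (adj : rel T) (G : {set T * T}) (e : seq T) :
  is_tree adj -> is_orientation adj G ->
  valid G e -> endpt G e = G ->
  ~ req adj G e [::] ->
  (forall e' : seq T, valid G e' -> req adj G e' e -> size e <= size e') ->
  forall i : T, i \in e.
Proof.
move=> [_ adj_sym _ conn _] oG ve loop nontrivial _ i.
apply/negPn/negP => i_notin; apply: nontrivial.
set h := heights G 0%R e.
have flat : closed adj [pred x | h x == h i].
  by move=> a b /(heights_loop_edge adj_sym oG ve loop); rewrite !inE => ->.
apply: balanced_req_nil => //; apply/ffunP => z; rewrite ffunE.
have := closed_connect flat (conn i z); rewrite !inE eqxx => /esym/eqP ->.
by rewrite /h heights_notin // ffunE.
Qed.
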